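(* For integers $1\le k\le n$, let $h_{k|n}(p)=\sum_{i=k}^{n}\binom{n}{i}p^i(1-p)^{n-i}$, $p\in[0,1]$, be the reliability function of a $k$-out-of-$n$ system with i.i.d. components each of reliability $p$, and let $H_{k|n}(p)=p\,h_{k|n}'(p)/h_{k|n}(p)$ for $p\in(0,1)$. Then: (ii) for integers $1\le k\le n$ and $1\le l\le m$ with $k\le l$ and $m-l\le n-k$, the ratio $H_{k|n}(p)/H_{l|m}(p)$ is decreasing in $p\in(0,1)$; (iii) for $1\le k\le n$, the function $(1-p)\,H_{k|n}'(p)/H_{k|n}(p)$ is decreasing in $p\in(0,1)$.
   Context: ''Increasing'' means non-decreasing and ''decreasing'' means non-increasing. A $k$-out-of-$n$ system functions as long as at least $k$ of its $n$ components function. (Part (i) of this lemma in the paper, that $H_{k|n}$ is decreasing, is a cited result and is not included.) *)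

From HB Require Import structures.
From mathcomp Require Import all_boot all_order all_algebra.
From mathcomp Require Import all_classical all_reals all_analysis.
Set Implicit Arguments. Unset Strict Implicit. Unset Printing Implicit Defensive.
Import Order.TTheory GRing.Theory Num.Theory.
Local Open Scope ring_scope.

Definition relk {R : realType} (k n : nat) (p : R) : R :=
  \sum_(k <= i < n.+1) ('C(n, i))%:R * p ^+ i * (1 - p) ^+ (n - i).

Definition Hk {R : realType} (k n : nat) (p : R) : R :=
  p * derive1 (relk k n) p / relk k n p.

(* "decreasing" = non-increasing on the open interval (0,1). *)
Definition decreasing_on01 {R : realType} (f : R -> R) : Prop :=
  forall p q : R, 0 < p -> p <= q -> q < 1 -> f q <= f p.

From HB Require Import structures.
From mathcomp Require Import all_boot all_order all_algebra.
From mathcomp Require Import all_classical all_reals all_analysis.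
From mathcomp Require Import ring lra zify.
Import Order.TTheory GRing.Theory Num.Theory.
Local Open Scope ring_scope.

(* Write t = p / (1 - p) for the odds, an increasing function of p.  Then
   h_{k|n}(p) = (1 - p)^n t^k S_{n,k}(t) with S_{n,k}(t) = sum_j C(n, k + j) t^j,
   and p h'_{k|n}(p) = k C(n, k) p^k (1 - p)^(n - k), so H_{k|n} = k C(n, k) / S_{n,k}(t).
   Thus H_{k|n} / H_{l|m} is a positive constant times S_{m,l}(t) / S_{n,k}(t), and
   logarithmic differentiation gives (1 - p) H'_{k|n} / H_{k|n} = k S_{n,k+1}(t) / S_{n,k}(t) - (n - k).
   Both are ratios sum_j a_j t^j / sum_j b_j t^j whose coefficient ratios a_j / b_j
   decrease in j, and such a ratio decreases in t > 0: the numerator of its difference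
   at s <= t is the symmetrised sum over i, j of (a_i b_j - a_j b_i) (s^i t^j - t^i s^j),
   whose terms are all nonnegative. *)

Lemma leq_bin_ratio_step m n l k j : (k <= l)%N -> (m - l <= n - k)%N ->
  ('C(m, (l + j).+1) * 'C(n, k + j) <= 'C(m, l + j) * 'C(n, (k + j).+1))%N.
Proof.
move=> kl mlnk.
have coef : ((m - (l + j)) * (k + j).+1 <= (l + j).+1 * (n - (k + j)))%N.
  by rewrite mulnC leq_mul //; lia.
rewrite -(@leq_pmul2l ((l + j).+1 * (k + j).+1)) ?muln_gt0 //.
rewrite mulnACA [X in (_ <= X)%N]mulnACA !mul_bin_left.
by rewrite mulnACA [X in (_ <= X)%N]mulnACA leq_mul2r coef orbT.
Qed.

Section PowerSeriesRatio.
Variable R : realFieldType.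

Lemma ler_pow_cross (s t : R) i j : 0 <= s <= t -> (i <= j)%N ->
  t ^+ i * s ^+ j <= s ^+ i * t ^+ j.
Proof.
move=> /andP[s0 st] /subnKC <-; rewrite !exprD mulrCA.
have t0 := le_trans s0 st.
by rewrite !ler_wpM2l ?exprn_ge0 ?lerXn2r ?nnegrE.
Qed.

Lemma sum_pow_gt0 (b : nat -> R) N (t : R) : (0 < N)%N -> 0 < b 0 ->
  (forall j, (j < N)%N -> 0 <= b j) -> 0 < t -> 0 < \sum_(j < N) b j * t ^+ j.
Proof.
case: N => // N _ b0 b_ge0 t0; rewrite big_ord_recl expr0 mulr1 ltr_wpDr //.
by apply: sumr_ge0 => j _; rewrite mulr_ge0 ?b_ge0 // exprn_ge0 // ltW.
Qed.

Lemma ratio_sum_pow_nonincr (a b : nat -> R) N (s t : R) : (0 < N)%N ->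
  (forall j, (j < N)%N -> 0 < b j) ->
  (forall i j, (i <= j < N)%N -> a j / b j <= a i / b i) ->
  0 < s <= t ->
  (\sum_(j < N) a j * t ^+ j) / (\sum_(j < N) b j * t ^+ j) <=
  (\sum_(j < N) a j * s ^+ j) / (\sum_(j < N) b j * s ^+ j).
Proof.
move=> N0 bpos ab /andP[s0 st]; have t0 := lt_le_trans s0 st.
have s0t : 0 <= s <= t by rewrite ltW.
have Bpos u : 0 < u -> 0 < \sum_(j < N) b j * u ^+ j.
  by move=> u0; apply: sum_pow_gt0 => // [|j /bpos/ltW //]; apply: bpos.
rewrite ler_pdivrMr ?Bpos // mulrAC ler_pdivlMr ?Bpos // -subr_ge0.
pose T (i j : 'I_N) := a i * b j * (s ^+ i * t ^+ j - t ^+ i * s ^+ j).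
have -> : (\sum_(j < N) a j * s ^+ j) * (\sum_(j < N) b j * t ^+ j) -
    (\sum_(j < N) a j * t ^+ j) * (\sum_(j < N) b j * s ^+ j) = \sum_i \sum_j T i j.
  rewrite !mulr_suml -sumrB; apply: eq_bigr => i _.
  by rewrite !mulr_sumr -sumrB; apply: eq_bigr => j _; rewrite /T; ring.
have sym_ge0 i j : 0 <= T i j + T j i.
  have -> : T i j + T j i = (a i * b j - a j * b i) * (s ^+ i * t ^+ j - t ^+ i * s ^+ j).
    by rewrite /T; ring.
  wlog ij : i j / (i <= j)%N => [hwlog|].
    case: (leqP i j) => [/hwlog //|/ltnW /hwlog].
    by rewrite -mulrNN !opprB [s ^+ j * _]mulrC [t ^+ j * _]mulrC.
  have bi := bpos i (ltn_ord i); have bj := bpos j (ltn_ord j).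
  apply: mulr_ge0; last by rewrite subr_ge0 ler_pow_cross.
  rewrite subr_ge0 -ler_pdivlMr // mulrAC -ler_pdivrMr //.
  by apply: ab; rewrite ij ltn_ord.
rewrite -(pmulrn_lge0 _ (ltn0Sn 1)) mulr2n {2}exchange_big -big_split /=.
by apply: sumr_ge0 => i _; rewrite -big_split; apply: sumr_ge0 => j _; apply: sym_ge0.
Qed.

End PowerSeriesRatio.


Lemma logderiv_horner_div (R : realType) (G P : {poly R}) x :
  G.[x] != 0 -> P.[x] != 0 ->
  derive1 (fun y => G.[y] / P.[y]) x / (G.[x] / P.[x]) =
  G^`().[x] / G.[x] - P^`().[x] / P.[x].
Proof.
move=> G0 P0; have dP := is_deriveV P0 (is_derive_poly P x).
have /@derive_val := is_deriveM (is_derive_poly G x) dP.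
rewrite -derive1E /= => ->; rewrite /( *:%R) /=.
by field; rewrite G0 P0.
Qed.

Section Reliability.
Variable R : realType.

Definition odds (x : R) : R := x / (1 - x).

Definition bernstein (n i : nat) : {poly R} := 'X^i * (1 - 'X) ^+ (n - i).

Definition relk_poly (k n : nat) : {poly R} :=
  \sum_(k <= i < n.+1) 'C(n, i)%:R *: bernstein n i.

Definition binom_tail (n k N : nat) (t : R) : R :=
  \sum_(j < N) 'C(n, k + j)%:R * t ^+ j.

Lemma odds_gt0 x : 0 < x < 1 -> 0 < odds x.
Proof. by case/andP=> x0 x1; rewrite divr_gt0 // subr_gt0. Qed.

Lemma ler_odds x y : 0 < x -> x <= y -> y < 1 -> odds x <= odds y.
Proof.
move=> x0 xy y1; have x1 := le_lt_trans xy y1.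
rewrite /odds ler_pdivrMr ?subr_gt0 // mulrAC ler_pdivlMr ?subr_gt0 //; nra.
Qed.

Lemma relkE k n : relk k n = horner (relk_poly k n).
Proof.
apply/funext => x; rewrite /relk /relk_poly horner_sum; apply: eq_bigr => i _.
by rewrite !hornerE.
Qed.

Lemma horner_bernstein n i x : (i <= n)%N -> x != 1 ->
  (bernstein n i).[x] = (1 - x) ^+ n * odds x ^+ i.
Proof.
move=> /subnKC {2}<- x1; have x1' : 1 - x != 0 by rewrite subr_eq0 eq_sym.
rewrite /bernstein !hornerE /odds expr_div_n exprD.
by field; rewrite expf_neq0.
Qed.

Lemma relk_odds k n N x : (k <= n)%N -> (n - k < N)%N -> x != 1 ->
  relk k n x = (1 - x) ^+ n * odds x ^+ k * binom_tail n k N (odds x).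
Proof.
move=> kn nkN x1; rewrite relkE /relk_poly horner_sum /binom_tail mulr_sumr.
have -> : \sum_(k <= i < n.+1) ('C(n, i)%:R *: bernstein n i).[x] =
    \sum_(k <= i < k + N) ('C(n, i)%:R *: bernstein n i).[x].
  rewrite [RHS](big_cat_nat (n := n.+1)) ?(leqW kn) //=; last by lia.
  rewrite [X in _ = _ + X]big_nat_cond [X in _ = _ + X]big1 ?addr0 // => i.
  by rewrite andbT => /andP[ni _]; rewrite bin_small // scale0r horner0.
rewrite -{1}(add0n k) big_addn addKn big_mkord; apply: eq_bigr => j _.
rewrite hornerZ addnC; case: (leqP (k + j) n) => [kjn|nkj]; last first.
  by rewrite bin_small // !(mul0r, mulr0).
by rewrite horner_bernstein // exprD; ring.
Qed.

Lemma binom_tail_gt0 n k N t : (k <= n)%N -> (0 < N)%N -> 0 < t ->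
  0 < binom_tail n k N t.
Proof.
move=> kn N0 t0; apply: (@sum_pow_gt0 _ (fun j => 'C(n, k + j)%:R)) => //.
by rewrite addn0 ltr0n bin_gt0.
Qed.

Lemma relk_gt0 k n (x : R) : (k <= n)%N -> 0 < x < 1 -> 0 < relk k n x.
Proof.
move=> kn x01; have /andP[_ x1] := x01; have t0 := odds_gt0 x x01.
rewrite (relk_odds _ _ (n - k).+1) ?(lt_eqF x1) // !mulr_gt0 ?exprn_gt0 ?subr_gt0 //.
exact: binom_tail_gt0.
Qed.

Lemma binom_tail_split n k N t : (n <= k + N)%N ->
  binom_tail n k N.+1 t = 'C(n, k)%:R + t * binom_tail n k.+1 N.+1 t.
Proof.
move=> nkN; rewrite /binom_tail big_ord_recl addn0 expr0 mulr1; congr (_ + _).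
rewrite big_ord_recr /= bin_small; last by lia.
rewrite mul0r addr0 mulr_sumr; apply: eq_bigr => j _.
by rewrite /bump /= add1n addnS exprS mulrCA.
Qed.

Lemma mulX_deriv_bernstein n i :
  'X * (bernstein n i)^`() = i%:R *: bernstein n i - (n - i)%:R *: bernstein n i.+1.
Proof.
rewrite /bernstein derivM derivXn deriv_exp derivB derivX -polyC1 derivC subnS.
rewrite -[_ *+ i]mulr_natl -[_ *+ (n - i)]mulr_natl -!mul_polyC !polyC_natr exprS.
case: i => [|i]; first by rewrite expr0; ring.
rewrite exprS; ring.
Qed.

Lemma mulX_deriv_relk_poly k n :
  'X * (relk_poly k n)^`() = (k * 'C(n, k))%:R *: bernstein n k.
Proof.
have [d] := ubnP (n.+1 - k); elim: d k => // d IH k nkd.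
have [kn|nk] := leqP k n; last first.
  by rewrite /relk_poly big_geq // bin_small // deriv0 mulr0 muln0 scale0r.
rewrite /relk_poly big_ltn ?ltnS // -/(relk_poly k.+1 n).
rewrite derivD derivZ mulrDr -scalerAr mulX_deriv_bernstein IH //; last by lia.
by rewrite mul_bin_left !natrM scalerBr !scalerA [_ * 'C(n, k)%:R]mulrC subrK mulrC.
Qed.

Lemma Hk_bernstein k n :
  Hk k n = (fun x => ((k * 'C(n, k))%:R *: bernstein n k).[x] / (relk_poly k n).[x]).
Proof.
by apply/funext => x; rewrite /Hk relkE -derivE -mulX_deriv_relk_poly hornerM hornerX.
Qed.

Lemma Hk_odds k n N x : (k <= n)%N -> (n - k < N)%N -> 0 < x < 1 ->
  Hk k n x = (k * 'C(n, k))%:R / binom_tail n k N (odds x).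
Proof.
move=> kn nkN x01; have /andP[_ x1] := x01; have t0 := odds_gt0 x x01.
have S0 : 0 < binom_tail n k N (odds x) by apply: binom_tail_gt0 => //; lia.
rewrite Hk_bernstein hornerZ horner_bernstein ?(lt_eqF x1) // -relkE.
rewrite (relk_odds _ _ N) ?(lt_eqF x1) //.
by field; rewrite !expf_neq0 ?gt_eqF ?subr_gt0.
Qed.

Lemma logderiv_bernstein n i x : (i <= n)%N -> 0 < x < 1 ->
  x * (bernstein n i)^`().[x] / (bernstein n i).[x] = i%:R - (n - i)%:R * odds x.
Proof.
move=> i_n x01; have /andP[x0 x1] := x01; have t0 := odds_gt0 x x01.
have B0 : (bernstein n i).[x] != 0.
  by rewrite horner_bernstein ?(lt_eqF x1) // gt_eqF // mulr_gt0 // exprn_gt0 // subr_gt0.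
have := congr1 (horner^~ x) (mulX_deriv_bernstein n i).
rewrite hornerM hornerX /= => ->; rewrite hornerD hornerN !hornerZ.
have [ltin|] := ltnP i n; last by move=> ni; rewrite (eqP ni) !mul0r subr0; field.
rewrite !horner_bernstein ?(lt_eqF x1) // exprS.
by field; rewrite !expf_neq0 // gt_eqF // subr_gt0.
Qed.

Lemma Hk_logderiv k n x : (0 < k <= n)%N -> 0 < x < 1 ->
  (1 - x) * derive1 (Hk k n) x / Hk k n x = (k%:R - Hk k n x) / odds x - (n - k)%:R.
Proof.
move=> /andP[k0 kn] x01; have /andP[x0 x1] := x01.
set B := bernstein n k; set P := relk_poly k n.
have k0' : k%:R != 0 :> R by rewrite pnatr_eq0 -lt0n.
have C0 : 'C(n, k)%:R != 0 :> R by rewrite pnatr_eq0 -lt0n bin_gt0.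
have c0 : (k * 'C(n, k))%:R != 0 :> R by rewrite natrM mulf_neq0.
have B0 : B.[x] != 0.
  by rewrite horner_bernstein ?(lt_eqF x1) // gt_eqF // mulr_gt0 ?exprn_gt0 ?odds_gt0 ?subr_gt0.
have P0 : P.[x] != 0 by rewrite -relkE gt_eqF ?relk_gt0.
have dP : P^`().[x] = (k * 'C(n, k))%:R * B.[x] / x.
  have := congr1 (horner^~ x) (mulX_deriv_relk_poly k n).
  by rewrite hornerM hornerX hornerZ /= => <-; field; rewrite gt_eqF.
have dB : B^`().[x] = (k%:R - (n - k)%:R * odds x) * B.[x] / x.
  by rewrite -logderiv_bernstein //; field; rewrite gt_eqF.
rewrite Hk_bernstein -mulrA logderiv_horner_div ?hornerZ ?mulf_neq0 //.
rewrite derivZ hornerZ dP dB /odds natrM.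
by field; rewrite subr_eq0 eq_sym (lt_eqF x1) gt_eqF // P0 B0 C0 k0'.
Qed.

Lemma Hk_logderiv_odds k n x : (0 < k <= n)%N -> 0 < x < 1 ->
  (1 - x) * derive1 (Hk k n) x / Hk k n x =
  k%:R * (binom_tail n k.+1 (n - k).+1 (odds x) / binom_tail n k (n - k).+1 (odds x))
  - (n - k)%:R.
Proof.
move=> /andP[k0 kn] x01; have t0 := odds_gt0 x x01.
have S0 : 0 < binom_tail n k (n - k).+1 (odds x) by exact: binom_tail_gt0.
rewrite Hk_logderiv ?k0 // (Hk_odds _ _ (n - k).+1) //.
move: S0; rewrite binom_tail_split ?subnKC // => S0.
by field; rewrite !gt_eqF.
Qed.

Lemma binom_tail_ratio_nonincr m n l k (s t : R) :
  (k <= n)%N -> (k <= l)%N -> (m - l <= n - k)%N -> 0 < s <= t ->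
  binom_tail m l (n - k).+1 t / binom_tail n k (n - k).+1 t <=
  binom_tail m l (n - k).+1 s / binom_tail n k (n - k).+1 s.
Proof.
move=> kn kl mlnk st.
have bpos j : (j < (n - k).+1)%N -> 0 < 'C(n, k + j)%:R :> R.
  by move=> jN; rewrite ltr0n bin_gt0; lia.
apply: (@ratio_sum_pow_nonincr _ (fun j => 'C(m, l + j)%:R) (fun j => 'C(n, k + j)%:R)) => //.
move=> i j /andP[ij jN].
have lt_convex : {in gtn (n - k).+1 &, forall i j h, (i < h < j)%N -> h \in gtn (n - k).+1}.
  by move=> a b _; rewrite inE => bN h /andP[_ hb]; rewrite inE; lia.
apply: (Order.NatMonotonyTheory.nonincn_inP
  (f := fun j => 'C(m, l + j)%:R / 'C(n, k + j)%:R) lt_convex) (ij); last 2 first.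
- exact: jN.
- exact: leq_ltn_trans ij jN.
move=> h _; rewrite inE => hN; have hN' := ltnW hN.
rewrite ler_pdivrMr ?bpos // mulrAC ler_pdivlMr ?bpos //.
by rewrite -!natrM ler_nat !addnS leq_bin_ratio_step.
Qed.

Lemma decreasing_on01_odds (f g : R -> R) :
  (forall x, 0 < x < 1 -> f x = g (odds x)) ->
  (forall s t, 0 < s <= t -> g t <= g s) -> decreasing_on01 f.
Proof.
move=> fg g_nonincr p q p0 pq q1.
have p01 : 0 < p < 1 by rewrite p0 (le_lt_trans pq q1).
have q01 : 0 < q < 1 by rewrite q1 (lt_le_trans p0 pq).
by rewrite !fg // g_nonincr // odds_gt0 // ler_odds.
Qed.

Lemma Hk_ratio_decreasing k n l m :
  (k <= n)%N -> (0 < l <= m)%N -> (k <= l)%N -> (m - l <= n - k)%N ->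
  decreasing_on01 (fun p : R => Hk k n p / Hk l m p).
Proof.
move=> kn /andP[l0 lm] kl mlnk.
pose c : R := (k * 'C(n, k))%:R / (l * 'C(m, l))%:R.
apply: (@decreasing_on01_odds _ (fun t =>
  c * (binom_tail m l (n - k).+1 t / binom_tail n k (n - k).+1 t))).
  move=> x x01; have t0 := odds_gt0 x x01.
  rewrite (Hk_odds _ _ (n - k).+1) // (Hk_odds _ _ (n - k).+1) ?ltnS //.
  have Sl := @binom_tail_gt0 m l (n - k).+1 _ lm isT t0.
  have Sk := @binom_tail_gt0 n k (n - k).+1 _ kn isT t0.
  have l0' : l%:R != 0 :> R by rewrite pnatr_eq0 -lt0n.
  have C0 : 'C(m, l)%:R != 0 :> R by rewrite pnatr_eq0 -lt0n bin_gt0.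
  by rewrite /c; field; rewrite l0' C0 !gt_eqF.
move=> s t st; rewrite ler_wpM2l ?divr_ge0 ?ler0n //.
exact: binom_tail_ratio_nonincr.
Qed.

Lemma Hk_logderiv_decreasing k n : (1 <= k <= n)%N ->
  decreasing_on01 (fun p : R => (1 - p) * derive1 (Hk k n) p / Hk k n p).
Proof.
move=> kn; have /andP[_ k_le_n] := kn.
apply: (@decreasing_on01_odds _ (fun t => k%:R *
  (binom_tail n k.+1 (n - k).+1 t / binom_tail n k (n - k).+1 t) - (n - k)%:R)).
  by move=> x x01; rewrite Hk_logderiv_odds.
move=> s t st; rewrite lerD2r ler_wpM2l ?ler0n //.
by apply: binom_tail_ratio_nonincr; rewrite ?leqnSn ?subnS ?leq_pred.
Qed.

End Reliability.

Theorem lemma2p3 (R : realType) :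
  (* (ii) *)
  (forall k n l m : nat,
      (1 <= k <= n)%N -> (1 <= l <= m)%N -> (k <= l)%N -> (m - l <= n - k)%N ->
      decreasing_on01 (fun p : R => Hk k n p / Hk l m p)) /\
  (* (iii) *)
  (forall k n : nat, (1 <= k <= n)%N ->
      decreasing_on01 (fun p : R => (1 - p) * derive1 (Hk k n) p / Hk k n p)).
Proof.
split; last exact: Hk_logderiv_decreasing.
by move=> k n l m /andP[_ kn]; apply: Hk_ratio_decreasing.
Qed.
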